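(* Let $\mathcal{H}$ be a Hilbert space, $n\ge2$, and let $y_1,\dots,y_n\in\mathcal{H}$ satisfy $\|y_i\|\le1$ for all $i$ and $\|y_i-y_j\|>1/3$ for all $i\ne j$. Let $\mu=\frac1n\sum_{i=1}^n\delta_{y_i}$ and $\mu_n=\frac1n\sum_{i=1}^n\delta_{X_i}$ with $X_1,\dots,X_n$ i.i.d. of law $\mu$. Then $$\mathbb{E}\,W_2(\mu,\mu_n)\ge\mathbb{E}\,W_1(\mu,\mu_n)\ge\frac{1}{12\sqrt2}.$$ Consequently, if $y_1,\dots,y_n$ lie in a subspace of dimension $d$, then $\big(\mathbb{E}\,S_1^2(\mu,\mu_n)\big)^{1/2}\ge\frac{1}{12\sqrt{2d}}$.
   Context: $\Pi(\mu,\nu)$ is the set of couplings of $\mu,\nu$. $W_p(\mu,\nu)=\inf_{\pi\in\Pi(\mu,\nu)}\big(\int\|x-y\|^p\,d\pi(x,y)\big)^{1/p}$ for $p=1,2$, and $S_1(\mu,\nu)=\inf_{\pi\in\Pi(\mu,\nu)}\sup_{\|w\|\le1}\big(\int\langle w,x-y\rangle^2\,d\pi(x,y)\big)^{1/2}$. *)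

From HB Require Import structures.
From mathcomp Require Import all_boot all_order all_algebra.
From mathcomp Require Import all_classical all_reals all_analysis.
Set Implicit Arguments. Unset Strict Implicit. Unset Printing Implicit Defensive.
Import Order.TTheory GRing.Theory Num.Theory.
Import numFieldNormedType.Exports.
Local Open Scope classical_set_scope.
Local Open Scope ring_scope.

Section Defs.
Variables (R : realType) (V : normedModType R).

(* Together with completeness of V
   (required in the theorem) this makes V a real Hilbert space. *)
Definition is_inner_product (inner : V -> V -> R) : Prop :=
  [/\ forall x y, inner x y = inner y x,
      forall a x y z, inner (a *: x + y) z = a * inner x z + inner y z
    & forall x, `|x| ^+ 2 = inner x x].

(* Finitely supported (Borel) measures on a type T, as lists of
   (mass, atom) pairs; integration of an arbitrary function. *)
Definition dmeas (T : Type) := seq (R * T).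
Definition dint (T : Type) (m : dmeas T) (f : T -> R) : R :=
  \sum_(a <- m) a.1 * f a.2.

Definition coupling (mu nu : dmeas V) (pi : dmeas (V * V)) : Prop :=
  [/\ forall a, a \in pi -> 0 <= a.1,
      forall f : V -> R, dint pi (fun z => f z.1) = dint mu f
    & forall f : V -> R, dint pi (fun z => f z.2) = dint nu f].

(* W_1, W_2 and S_1 (couplings of finitely supported measures are
   finitely supported, so the infima range over all couplings). *)
Definition W1 (mu nu : dmeas V) : R :=
  inf [set c | exists pi, coupling mu nu pi /\
                 c = dint pi (fun z => `|z.1 - z.2|)].

Definition W2 (mu nu : dmeas V) : R :=
  inf [set c | exists pi, coupling mu nu pi /\
                 c = Num.sqrt (dint pi (fun z => `|z.1 - z.2| ^+ 2))].

Definition S1 (inner : V -> V -> R) (mu nu : dmeas V) : R :=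
  inf [set c | exists pi, coupling mu nu pi /\
         c = sup [set s | exists w : V, `|w| <= 1 /\
                   s = Num.sqrt (dint pi (fun z => (inner w (z.1 - z.2)) ^+ 2))]].

Definition unif_meas (n : nat) (y : 'I_n -> V) : dmeas V :=
  [seq (n%:R^-1, y i) | i <- enum 'I_n].

(* Expectation of F(X_1,...,X_n) for X_1..X_n i.i.d. with law
   (1/n) sum_i delta_{y_i}: the index vector (k_1,...,k_n) with X_j = y_{k_j}
   is uniform on 'I_n^n, so E F = n^-n * sum_{k : 'I_n -> 'I_n} F k. *)
Definition Eiid (n : nat) (F : {ffun 'I_n -> 'I_n} -> R) : R :=
  (n%:R ^+ n)^-1 * \sum_(k : {ffun 'I_n -> 'I_n}) F k.

Definition emp_meas (n : nat) (y : 'I_n -> V) (k : {ffun 'I_n -> 'I_n}) : dmeas V :=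
  unif_meas (fun j => y (k j)).

Definition lin_indep (d : nat) (e : 'I_d -> V) : Prop :=
  forall c : 'I_d -> R, \sum_(l < d) c l *: e l = 0 -> forall l, c l = 0.
Definition in_span (d : nat) (e : 'I_d -> V) (x : V) : Prop :=
  exists c : 'I_d -> R, x = \sum_(l < d) c l *: e l.

End Defs.

From HB Require Import structures.
From mathcomp Require Import all_boot all_order all_algebra.
From mathcomp Require Import all_classical all_reals all_analysis.
From mathcomp Require Import ring lra zify.
Set Implicit Arguments. Unset Strict Implicit. Unset Printing Implicit Defensive.
Import Order.TTheory GRing.Theory Num.Theory.
Import numFieldNormedType.Exports.
Local Open Scope classical_set_scope.
Local Open Scope ring_scope.

(* W1 <= W2 holds coupling by coupling, by Jensen's inequality.  For the
   lower bound, the distance to the sample points capped at 1/3 is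
   1-Lipschitz, vanishes on the sample and is at least 1/3 at every y_i that
   was not drawn; by weak Kantorovich duality W1(mu, mu_n) is thus at least
   1/3 times the fraction of undrawn points, whose expectation (1 - 1/n)^n is
   at least 1/4.  For S1, an orthonormal family u_1, ..., u_d of the span of
   the y_i (Gram-Schmidt) gives, for every coupling pi,
   int |x - y|^2 dpi = sum_l int <u_l, x - y>^2 dpi <= d S_pi^2, hence
   W1 <= sqrt d * S1 and E S1^2 >= (E W1)^2 / d. *)

Lemma in_spanB (R : realType) (V : normedModType R) d (e : 'I_d -> V) x z :
  in_span e x -> in_span e z -> in_span e (x - z).
Proof.
move=> [c ->] [c' ->]; exists (fun l => c l - c' l).
by rewrite -sumrB; apply: eq_bigr => l _; rewrite scalerBl.
Qed.

Section InnerProduct.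
Variables (R : realType) (V : normedModType R) (inner : V -> V -> R).
Hypothesis ip : is_inner_product inner.

Lemma innerC x y : inner x y = inner y x.
Proof. by case: ip. Qed.

Lemma inner_self x : inner x x = `|x| ^+ 2.
Proof. by case: ip. Qed.

Lemma innerZDr a x y z : inner z (a *: x + y) = a * inner z x + inner z y.
Proof. by rewrite !(innerC z); case: ip. Qed.

Lemma inner0r z : inner z 0 = 0.
Proof. by have := innerZDr 1 0 0 z; rewrite scaler0 addr0 mul1r; lra. Qed.

Lemma inner0l z : inner 0 z = 0.
Proof. by rewrite innerC inner0r. Qed.

Lemma innerZr a x z : inner z (a *: x) = a * inner z x.
Proof. by have := innerZDr a x 0 z; rewrite addr0 inner0r addr0. Qed.

Lemma innerDr x y z : inner z (x + y) = inner z x + inner z y.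
Proof. by have := innerZDr 1 x y z; rewrite scale1r mul1r. Qed.

Lemma innerZl a x z : inner (a *: x) z = a * inner x z.
Proof. by rewrite innerC innerZr innerC. Qed.

Lemma innerBr x y z : inner z (x - y) = inner z x - inner z y.
Proof. by rewrite addrC -scaleN1r innerZDr mulN1r addrC. Qed.

Lemma innerBl x y z : inner (x - y) z = inner x z - inner y z.
Proof. by rewrite !(innerC _ z) innerBr. Qed.

Lemma inner_sumr (I : Type) (r : seq I) (P : pred I) (F : I -> V) z :
  inner z (\sum_(i <- r | P i) F i) = \sum_(i <- r | P i) inner z (F i).
Proof.
exact: (big_morph (inner z) (fun x y => innerDr x y z) (inner0r z)).
Qed.

Lemma inner_sqr_le x z : inner x z ^+ 2 <= `|x| ^+ 2 * `|z| ^+ 2.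
Proof.
have [->|z0] := eqVneq z 0; first by rewrite inner0r normr0 expr0n mulr0.
have z2 : 0 < `|z| ^+ 2 by rewrite exprn_gt0 // normr_gt0.
(* | |z|^2 x - <x,z> z |^2 = |z|^2 (|x|^2 |z|^2 - <x,z>^2) *)
have := sqr_ge0 `| `|z| ^+ 2 *: x - inner x z *: z|.
rewrite -[`|_ - _| ^+ 2]inner_self innerBl !innerBr !innerZl !innerZr (innerC z x) !inner_self.
nra.
Qed.

Definition fourier (u : nat -> V) (d : nat) (x : V) : V :=
  \sum_(m < d) inner (u m) x *: u m.

(* Zero vectors are allowed, so that Gram-Schmidt needs no independence. *)
Definition orthonormal0 (u : nat -> V) (d : nat) : Prop :=
  forall l m, (l < d)%N -> (m < d)%N ->
    inner (u l) (u m) = ((l == m) && (u l != 0))%:R.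

Lemma fourierD u d x z : fourier u d (x + z) = fourier u d x + fourier u d z.
Proof.
by rewrite /fourier -big_split; apply: eq_bigr => m _; rewrite innerDr scalerDl.
Qed.

Lemma fourierZ u d a x : fourier u d (a *: x) = a *: fourier u d x.
Proof.
by rewrite /fourier scaler_sumr; apply: eq_bigr => m _; rewrite innerZr scalerA.
Qed.

Lemma fourier0 u d : fourier u d 0 = 0.
Proof. by rewrite /fourier big1 // => m _; rewrite inner0r scale0r. Qed.

Lemma inner_fourier u d z x :
  (forall m, (m < d)%N -> inner z (u m) = 0) -> inner z (fourier u d x) = 0.
Proof.
move=> zu; rewrite inner_sumr big1 // => m _.
by rewrite innerZr zu ?mulr0.
Qed.

Lemma inner_sub_fourier u d x m :
  orthonormal0 u d -> (m < d)%N -> inner (u m) (x - fourier u d x) = 0.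
Proof.
move=> uo md; rewrite innerBr inner_sumr (bigD1 (Ordinal md)) //= big1.
  rewrite innerZr uo // eqxx /= addr0.
  by have [->|] := eqVneq (u m) 0; rewrite ?inner0l ?mul0r ?mulr1 subrr.
move=> j /eqP jm; rewrite innerZr uo //.
have -> : (m == j) = false by apply/eqP => mj; apply: jm; apply: val_inj.
by rewrite mulr0.
Qed.

Lemma norm_normalize (v : V) : `| `|v|^-1 *: v| = (v != 0)%:R.
Proof.
have [->|v0] := eqVneq v 0; first by rewrite scaler0 normr0.
by rewrite normrZ normfV normr_id mulVf // normr_eq0.
Qed.

Lemma scale_normalize (v : V) : `|v| *: (`|v|^-1 *: v) = v.
Proof.
have [->|v0] := eqVneq v 0; first by rewrite !scaler0.
by rewrite scalerA mulfV ?scale1r // normr_eq0.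
Qed.

Lemma gram_schmidt (e : nat -> V) d : exists u, orthonormal0 u d /\
  forall l, (l < d)%N -> fourier u d (e l) = e l.
Proof.
elim: d => [|d [u [uo ue]]]; first by exists (fun=> 0).
(* if v = 0 then w = 0, since 0^-1 = 0 *)
set v := e d - fourier u d (e d); set w := `|v|^-1 *: v.
have uw m : (m < d)%N -> inner (u m) w = 0.
  by move=> md; rewrite innerZr inner_sub_fourier ?mulr0.
have wu m : (m < d)%N -> inner w (u m) = 0 by move=> md; rewrite innerC uw.
pose u' l := if l == d then w else u l.
have fourierS x : fourier u' d.+1 x = fourier u d x + inner w x *: w.
  rewrite /fourier big_ord_recr /= /u' eqxx; congr (_ + _).
  by apply: eq_bigr => i _; rewrite ltn_eqF.
exists u'; split.
  move=> l m; rewrite /u' ltnS leq_eqVlt => /orP[/eqP->|ld];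
    rewrite ltnS leq_eqVlt => /orP[/eqP->|md].
  - have w0 : (w != 0) = (v != 0) by rewrite -normr_eq0 norm_normalize pnatr_eq0 eqb0 negbK.
    by rewrite eqxx inner_self norm_normalize w0; case: (v != 0); rewrite ?expr1n ?expr0n.
  - by rewrite eqxx (ltn_eqF md) wu // eq_sym ltn_eqF.
  - by rewrite eqxx (ltn_eqF ld) uw // ltn_eqF.
  - by rewrite (ltn_eqF ld) (ltn_eqF md); exact: uo.
move=> l; rewrite ltnS leq_eqVlt fourierS => /orP[/eqP->|ld].
  have -> : inner w (e d) = `|v|.
    rewrite -[e d](subrK (fourier u d (e d))) -/v addrC.
    rewrite innerDr inner_fourier // add0r innerZl inner_self.
    have [->|v0] := eqVneq v 0; first by rewrite normr0 expr0n mulr0.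
    by rewrite expr2 mulKf // normr_eq0.
  by rewrite scale_normalize /v addrC subrK.
by rewrite ue // -[in inner w _](ue l ld) inner_fourier // scale0r addr0.
Qed.

Lemma fourier_parseval u d x :
  fourier u d x = x -> `|x| ^+ 2 = \sum_(m < d) inner (u m) x ^+ 2.
Proof.
move=> fx; rewrite -inner_self -{2}fx inner_sumr; apply: eq_bigr => m _.
by rewrite innerZr innerC expr2.
Qed.

Lemma parseval_frame d (e : 'I_d -> V) : exists u : nat -> V,
  (forall l : 'I_d, `|u l| <= 1) /\
  forall x, in_span e x -> `|x| ^+ 2 = \sum_(l < d) inner (u l) x ^+ 2.
Proof.
have [u [uo ue]] := gram_schmidt (fun l => if insub l is Some i then e i else 0) d.
exists u; split=> [l|x [c ->]].
  rewrite -(@expr_le1 _ 2) // -inner_self uo // eqxx.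
  by case: (_ != 0).
apply: fourier_parseval; apply: (big_ind (fun x => fourier u d x = x)).
- exact: fourier0.
- by move=> x1 x2 h1 h2; rewrite fourierD h1 h2.
- by move=> l _; rewrite fourierZ; have := ue l (ltn_ord l); rewrite valK => ->.
Qed.

End InnerProduct.

Lemma sqr_wsum_le (R : realType) (I : eqType) (r : seq I) (m x : I -> R) :
  (forall i, i \in r -> 0 <= m i) -> \sum_(i <- r) m i = 1 ->
  (\sum_(i <- r) m i * x i) ^+ 2 <= \sum_(i <- r) m i * x i ^+ 2.
Proof.
move=> m0 m1; set s := \sum_(i <- r) m i * x i.
have : 0 <= \sum_(i <- r) m i * (x i - s) ^+ 2.
  by rewrite big_seq sumr_ge0 // => i ir; rewrite mulr_ge0 ?sqr_ge0 ?m0.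
rewrite (eq_bigr (fun i => m i * x i ^+ 2 - s *+ 2 * (m i * x i) + s ^+ 2 * m i));
  last by move=> i _; ring.
rewrite big_split sumrB /= -!mulr_sumr m1 -/s; lra.
Qed.

Section Couplings.
Variables (R : realType) (V : normedModType R).
Implicit Types (mu nu : dmeas R V) (pi : dmeas R (V * V)).

Lemma dint_ge0 (T : eqType) (m : dmeas R T) f :
  (forall a, a \in m -> 0 <= a.1) -> (forall x, 0 <= f x) -> 0 <= dint m f.
Proof. by move=> m0 f0; rewrite /dint big_seq sumr_ge0 // => a am; rewrite mulr_ge0 ?m0. Qed.

Lemma dint_sqr_le (T : eqType) (m : dmeas R T) f :
  (forall a, a \in m -> 0 <= a.1) -> dint m (fun=> 1) = 1 ->
  dint m f ^+ 2 <= dint m (fun x => f x ^+ 2).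
Proof.
move=> m0 m1; apply: sqr_wsum_le => //.
by rewrite -m1; apply: eq_bigr => a _; rewrite mulr1.
Qed.

Lemma dint_eq0_supp (T : eqType) (m : dmeas R T) f :
  (forall a, a \in m -> 0 <= a.1) -> (forall x, 0 <= f x) -> dint m f = 0 ->
  forall a, a \in m -> a.1 != 0 -> f a.2 = 0.
Proof.
move=> m0 f0 /eqP; rewrite /dint big_seq_cond psumr_eq0; last first.
  by move=> a /andP[am _]; rewrite mulr_ge0 ?m0.
move=> /allP fm a am; have /implyP := fm a am; rewrite am => /(_ isT).
by rewrite mulf_eq0 => /orP[/eqP->|/eqP] //; rewrite eqxx.
Qed.

Lemma le_inf_couplings mu nu (F : dmeas R (V * V) -> R) a pi0 :
  coupling mu nu pi0 -> (forall pi, coupling mu nu pi -> a <= F pi) ->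
  a <= inf [set c | exists pi, coupling mu nu pi /\ c = F pi].
Proof.
move=> c0 aF; apply: lb_le_inf; first by exists (F pi0), pi0.
by move=> _ [pi [cp ->]]; exact: aF.
Qed.

Lemma inf_couplings_le mu nu (F : dmeas R (V * V) -> R) pi :
  (forall pi, coupling mu nu pi -> 0 <= F pi) -> coupling mu nu pi ->
  inf [set c | exists pi, coupling mu nu pi /\ c = F pi] <= F pi.
Proof.
move=> F0 cp; apply: ge_inf; last by exists pi.
by exists 0 => _ [pi' [cp' ->]]; exact: F0.
Qed.

Definition W1_cost pi := dint pi (fun z => `|z.1 - z.2|).

Definition W2_cost pi := Num.sqrt (dint pi (fun z => `|z.1 - z.2| ^+ 2)).

Lemma coupling_mass mu nu pi :
  coupling mu nu pi -> dint pi (fun=> 1) = dint mu (fun=> 1).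
Proof. by case=> _ h _; exact: (h (fun=> 1)). Qed.

Lemma W1_cost_ge0 mu nu pi : coupling mu nu pi -> 0 <= W1_cost pi.
Proof. by case=> pi0 _ _; apply: dint_ge0. Qed.

Lemma W1_ge0 mu nu pi : coupling mu nu pi -> 0 <= W1 mu nu.
Proof. by move=> cp; apply: (le_inf_couplings (F := W1_cost) cp) => pi'; exact: W1_cost_ge0. Qed.

Lemma W1_le_cost mu nu pi : coupling mu nu pi -> W1 mu nu <= W1_cost pi.
Proof. exact: inf_couplings_le (@W1_cost_ge0 _ _). Qed.

Lemma W1_le_W2 mu nu pi :
  coupling mu nu pi -> dint mu (fun=> 1) = 1 -> W1 mu nu <= W2 mu nu.
Proof.
move=> cp mu1; apply: (le_inf_couplings (F := W2_cost) cp) => pi' cp'.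
apply: le_trans (W1_le_cost cp') _.
have [pi0 _ _] := cp'; rewrite -[X in X <= _]ger0_norm ?(W1_cost_ge0 cp') //.
rewrite -sqrtr_sqr ler_wsqrtr // dint_sqr_le //.
by rewrite (coupling_mass cp').
Qed.

Lemma W1_ge_lipschitz mu nu pi f :
  coupling mu nu pi -> (forall a b, f a - f b <= `|a - b|) ->
  dint mu f - dint nu f <= W1 mu nu.
Proof.
move=> cp flip; apply: (le_inf_couplings (F := W1_cost) cp) => pi' [pi0 h1 h2].
rewrite -h1 -h2 /dint -sumrB big_seq [leRHS]big_seq; apply: ler_sum => a ap.
by rewrite -mulrBr ler_wpM2l ?pi0.
Qed.

Lemma coupling_supp mu nu pi (P : V -> Prop) :
  coupling mu nu pi -> (forall a, a \in mu -> P a.2) -> (forall a, a \in nu -> P a.2) ->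
  forall a, a \in pi -> a.1 != 0 -> P a.2.1 /\ P a.2.2.
Proof.
move=> [pi0 h1 h2] Pmu Pnu a ap a0.
pose f x : R := (~~ `[< P x >])%:R.
have f0 x : 0 <= f x by rewrite ler0n.
have dint_f (m : dmeas R V) : (forall b, b \in m -> P b.2) -> dint m f = 0.
  move=> Pm; rewrite /dint big_seq big1 // => b bm.
  by rewrite /f asboolT ?mulr0 //; exact: Pm.
have Pf x : f x = 0 -> P x by rewrite /f; case: asboolP => //= _ /eqP; rewrite oner_eq0.
split; apply: Pf.
- by apply: (dint_eq0_supp pi0 (fun z => f0 z.1) _ ap a0); rewrite h1 dint_f.
- by apply: (dint_eq0_supp pi0 (fun z => f0 z.2) _ ap a0); rewrite h2 dint_f.
Qed.

End Couplings.

Section ProjectedCost.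
Variables (R : realType) (V : normedModType R) (inner : V -> V -> R).
Hypothesis ip : is_inner_product inner.
Implicit Types (mu nu : dmeas R V) (pi : dmeas R (V * V)).

Definition S1_cost pi := sup [set s | exists w : V, `|w| <= 1 /\
  s = Num.sqrt (dint pi (fun z => (inner w (z.1 - z.2)) ^+ 2))].

Lemma S1_cost_ge pi w :
  (forall a, a \in pi -> 0 <= a.1) -> `|w| <= 1 ->
  Num.sqrt (dint pi (fun z => inner w (z.1 - z.2) ^+ 2)) <= S1_cost pi.
Proof.
move=> pi0 w1; apply: ub_le_sup; last by exists w.
exists (Num.sqrt (dint pi (fun z => `|z.1 - z.2| ^+ 2))) => _ [w' [w'1 ->]].
rewrite ler_wsqrtr // /dint big_seq [leRHS]big_seq; apply: ler_sum => a ap.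
rewrite ler_wpM2l ?pi0 //; apply: le_trans (inner_sqr_le ip _ _) _.
by rewrite -[leRHS]mul1r ler_wpM2r ?sqr_ge0 // expr_le1.
Qed.

Lemma S1_cost_ge0 pi : (forall a, a \in pi -> 0 <= a.1) -> 0 <= S1_cost pi.
Proof.
by move=> pi0; apply: le_trans (S1_cost_ge (w := 0) pi0 _); rewrite ?sqrtr_ge0 ?normr0.
Qed.

Lemma W1_cost_le_sqrt_dim_S1_cost d (e : 'I_d -> V) pi :
  (forall a, a \in pi -> 0 <= a.1) -> dint pi (fun=> 1) = 1 ->
  (forall a, a \in pi -> a.1 != 0 -> in_span e (a.2.1 - a.2.2)) ->
  W1_cost pi <= Num.sqrt d%:R * S1_cost pi.
Proof.
move=> pi0 pi1 span_pi; have [u [u1 parseval]] := parseval_frame ip e.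
have S0 : 0 <= S1_cost pi := S1_cost_ge0 pi0.
have cost2E : dint pi (fun z => `|z.1 - z.2| ^+ 2) =
    \sum_(l < d) dint pi (fun z => inner (u l) (z.1 - z.2) ^+ 2).
  rewrite /dint exchange_big /= big_seq [RHS]big_seq; apply: eq_bigr => a ap.
  rewrite -mulr_sumr; have [->|a0] := eqVneq a.1 0; first by rewrite !mul0r.
  by rewrite (parseval _ (span_pi a ap a0)).
have cost2_le : dint pi (fun z => `|z.1 - z.2| ^+ 2) <= d%:R * S1_cost pi ^+ 2.
  rewrite cost2E (@le_trans _ _ (\sum_(l < d) S1_cost pi ^+ 2)) //; last first.
    by rewrite sumr_const card_ord mulr_natl.
  apply: ler_sum => l _.
  have c0 := dint_ge0 (f := fun z => inner (u l) (z.1 - z.2) ^+ 2) pi0 (fun _ => sqr_ge0 _).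
  rewrite -(sqr_sqrtr c0) ler_sqr ?nnegrE ?sqrtr_ge0 //.
  exact: S1_cost_ge.
rewrite -[S1_cost pi]ger0_norm // -sqrtr_sqr -sqrtrM ?ler0n //.
apply: le_trans (ler_wsqrtr cost2_le).
rewrite -[X in X <= _]ger0_norm ?dint_ge0 // -sqrtr_sqr ler_wsqrtr //.
exact: dint_sqr_le.
Qed.

Lemma W1_le_sqrt_dim_S1 d (e : 'I_d -> V) mu nu pi :
  coupling mu nu pi -> dint mu (fun=> 1) = 1 ->
  (forall a, a \in mu -> in_span e a.2) -> (forall a, a \in nu -> in_span e a.2) ->
  W1 mu nu <= Num.sqrt d%:R * S1 inner mu nu.
Proof.
move=> cp mu1 span_mu span_nu.
have W1_le pi' : coupling mu nu pi' -> W1 mu nu <= Num.sqrt d%:R * S1_cost pi'.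
  move=> cp'; apply: le_trans (W1_le_cost cp') _.
  have [pi0 _ _] := cp'; apply: W1_cost_le_sqrt_dim_S1_cost => //.
    by rewrite (coupling_mass cp').
  move=> a ap a0; have [ha1 ha2] := coupling_supp cp' span_mu span_nu ap a0.
  exact: in_spanB ha1 ha2.
have [d0|d_gt0] := posnP d; first by have := W1_le _ cp; rewrite d0 sqrtr0 !mul0r.
have sd : 0 < Num.sqrt d%:R :> R by rewrite sqrtr_gt0 ltr0n.
rewrite mulrC -ler_pdivrMr //.
apply: (le_inf_couplings (F := S1_cost) cp) => pi' cp'.
by rewrite ler_pdivrMr // mulrC; exact: W1_le.
Qed.

End ProjectedCost.

Section ExpnBounds.
Local Open Scope nat_scope.

(* (1 + 1/m)^(k+1) >= 1 + (k+1)/m *)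
Lemma bernoulli_expn m k : m ^ k * (m + k.+1) <= m.+1 ^ k.+1.
Proof.
elim: k => [|k IH]; first by rewrite expn0 mul1n expn1 addn1.
rewrite expnS [m.+1 ^ k.+2]expnS; move: IH; set a := m ^ k; nia.
Qed.

(* (1 - 1/m)^m increases: (n/(n+1))^(n+1) <= ((n+1)/(n+2))^(n+2) *)
Lemma expn_pred_ratio_homo n : n.+2 ^ n.+2 * n ^ n.+1 <= n.+1 ^ (n.+1 + n.+2).
Proof.
have -> : n.+2 ^ n.+2 * n ^ n.+1 = n.+2 * (n * n.+2) ^ n.+1.
  by rewrite expnMn [n.+2 ^ n.+2]expnS; ring.
have -> : n.+1 ^ (n.+1 + n.+2) = n.+1 * (n * n.+2).+1 ^ n.+1.
  have -> : (n * n.+2).+1 = n.+1 ^ 2 by ring.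
  by rewrite -expnM -expnS; congr (_ ^ _); lia.
have hm : n * n.+2 <= n.+1 * n.+1 by nia.
have := bernoulli_expn (n * n.+2) n; rewrite [(n * n.+2) ^ n.+1]expnS.
move: hm; move: (n * n.+2) => m; set a := m ^ n; set b := m.+1 ^ n.+1; nia.
Qed.

Lemma expn_le_4_expn_pred n : 1 < n -> n ^ n <= 4 * n.-1 ^ n.
Proof.
case: n => [|[|n]] // _; elim: n => [|n IH] //.
have := expn_pred_ratio_homo n.+1; rewrite expnD.
have : 0 < n.+2 ^ n.+2 by rewrite expn_gt0.
move: IH => /=; set a := n.+2 ^ n.+2; set b := n.+1 ^ n.+2.
set c := n.+3 ^ n.+3; set e := n.+2 ^ n.+3; nia.
Qed.

End ExpnBounds.

Section Expectation.
Variables (R : realType) (n : nat).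
Implicit Types (F G : {ffun 'I_n -> 'I_n} -> R).

Lemma ler_Eiid F G : (forall k, F k <= G k) -> Eiid F <= Eiid G.
Proof.
move=> FG; rewrite /Eiid ler_wpM2l ?invr_ge0 ?exprn_ge0 ?ler0n //.
by apply: ler_sum => k _; exact: FG.
Qed.

Lemma EiidZ c F : Eiid (fun k => c * F k) = c * Eiid F.
Proof. by rewrite /Eiid -mulr_sumr mulrCA. Qed.

Lemma Eiid_sqr_le F : (0 < n)%N -> Eiid F ^+ 2 <= Eiid (fun k => F k ^+ 2).
Proof.
move=> n0; have N0 : 0 < n%:R ^+ n :> R by rewrite exprn_gt0 // ltr0n.
rewrite /Eiid !mulr_sumr; apply: sqr_wsum_le => [k _|]; first by rewrite invr_ge0 ltW.
by rewrite sumr_const card_ffun !card_ord -[_ *+ _]mulr_natr natrX mulVf // gt_eqF.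
Qed.

Lemma Eiid_le_sqrt_Eiid_sqr F G c : (0 < n)%N -> 0 <= c ->
  (forall k, 0 <= F k <= c * G k) -> Eiid F <= c * Num.sqrt (Eiid (fun k => G k ^+ 2)).
Proof.
move=> n0 c0 FG; have EF0 : 0 <= Eiid F.
  rewrite /Eiid mulr_ge0 ?invr_ge0 ?exprn_ge0 ?ler0n ?sumr_ge0 // => k _.
  by case/andP: (FG k).
rewrite -[c]ger0_norm // -sqrtr_sqr -sqrtrM ?sqr_ge0 // -EiidZ.
rewrite -[Eiid F]ger0_norm // -sqrtr_sqr ler_wsqrtr //.
apply: le_trans (Eiid_sqr_le _ n0) _; apply: ler_Eiid => k.
have /andP[Fk0 FkG] := FG k.
by rewrite -exprMn ler_sqr ?nnegrE // (le_trans Fk0 FkG).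
Qed.

End Expectation.

Section CappedDistance.
Variables (R : realType) (V : normedModType R) (I : finType) (p : I -> V) (r : R).

Definition capped_dist (x : V) : R := \big[Num.min/r]_(i : I) `|x - p i|.

Lemma capped_dist_lipschitz x z : capped_dist x - capped_dist z <= `|x - z|.
Proof.
suff : capped_dist x - `|x - z| <= capped_dist z by lra.
apply: le_bigmin => [|i].
  by rewrite lerBlDr (le_trans (bigmin_le_id _ _ _ _)) // lerDl.
rewrite lerBlDr (le_trans (bigmin_le _ i _)) // [leRHS]addrC.
by have := ler_normD (x - z) (z - p i); rewrite addrA subrK.
Qed.

End CappedDistance.

Section UniformMeasure.
Variables (R : realType) (V : normedModType R) (n : nat) (y : 'I_n -> V).

Lemma dint_unif (f : V -> R) :
  dint (unif_meas y) f = n%:R^-1 * \sum_(i < n) f (y i).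
Proof. by rewrite /dint /unif_meas big_map big_enum mulr_sumr. Qed.

Lemma unif_mass : (0 < n)%N -> dint (unif_meas y) (fun=> 1) = 1.
Proof. by move=> n0; rewrite dint_unif sumr_const card_ord mulVf // pnatr_eq0 -lt0n. Qed.

Lemma mem_unif_meas a : a \in unif_meas y -> exists i, a.2 = y i.
Proof. by move=> /mapP[i _ ->]; exists i. Qed.

End UniformMeasure.

Section Sampling.
Variables (R : realType) (V : normedModType R) (n : nat) (y : 'I_n -> V).
Implicit Types (k : {ffun 'I_n -> 'I_n}).

Definition sample_coupling k : dmeas R (V * V) :=
  [seq (n%:R^-1, (y i, y (k i))) | i <- enum 'I_n].

Lemma sample_couplingP k : coupling (unif_meas y) (emp_meas y k) (sample_coupling k).
Proof.
split.
- by move=> a /mapP[i _ ->] /=; rewrite invr_ge0 ler0n.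
- by move=> f; rewrite dint_unif /dint big_map big_enum mulr_sumr.
- by move=> f; rewrite /emp_meas dint_unif /dint big_map big_enum mulr_sumr.
Qed.

Definition n_missed k : nat := \sum_(i < n) (i \notin codom k).

Lemma sum_n_missed : (\sum_k n_missed k = n * n.-1 ^ n)%N.
Proof.
rewrite exchange_big (eq_bigr (fun=> n.-1 ^ n)%N) ?sum_nat_const ?card_ord //.
move=> i _; have := card_ffun_on 'I_n (predC1 i); rewrite cardC1 !card_ord => <-.
rewrite -sum1_card [RHS]big_mkcond; apply: eq_bigr => k _.
have -> : (k \in ffun_on (predC1 i)) = (i \notin codom k).
  apply/ffun_onP/negP => [ki /codomP[j ij]|ki j].
    by have := ki j; rewrite inE -ij eqxx.
  by rewrite inE; apply/eqP => kji; apply: ki; rewrite -kji codom_f.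
by case: (i \notin codom k).
Qed.

Lemma W1_emp_ge r k : 0 <= r -> (forall i j, i != j -> r <= `|y i - y j|) ->
  r * (n_missed k)%:R / n%:R <= W1 (unif_meas y) (emp_meas y k).
Proof.
move=> r0 ysep; pose phi := capped_dist (fun j => y (k j)) r.
apply: le_trans (W1_ge_lipschitz (f := phi) (sample_couplingP k) (capped_dist_lipschitz _ _)).
rewrite /emp_meas !dint_unif.
have phi0 x : 0 <= phi x by apply: le_bigmin.
have -> : \sum_(j < n) phi (y (k j)) = 0.
  apply: big1 => j _; apply/eqP; rewrite eq_le phi0 andbT.
  by rewrite (le_trans (bigmin_le _ j _)) // subrr normr0.
rewrite mulr0 subr0 mulrC ler_wpM2l ?invr_ge0 ?ler0n // /n_missed natr_sum mulr_sumr.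
apply: ler_sum => i _; have [missed_i|_] := boolP (i \notin codom k).
  rewrite mulr1; apply: le_bigmin => // j _; apply: ysep.
  by apply: contraNneq missed_i => ->; exact: codom_f.
by rewrite mulr0.
Qed.

Lemma Eiid_W1_emp_ge r : (1 < n)%N -> 0 <= r ->
  (forall i j, i != j -> r <= `|y i - y j|) ->
  r / 4 <= Eiid (fun k => W1 (unif_meas y) (emp_meas y k)).
Proof.
move=> n1 r0 ysep; apply: le_trans (ler_Eiid (fun k => W1_emp_ge k r0 ysep)).
have n0 : n%:R != 0 :> R by rewrite pnatr_eq0 -lt0n ltnW.
set a : R := (n.-1 ^ n)%:R; set b : R := n%:R ^+ n.
have b0 : 0 < b by rewrite exprn_gt0 // ltr0n ltnW.
have ab : b <= 4 * a by rewrite /a /b -natrX -natrM ler_nat expn_le_4_expn_pred.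
have -> : Eiid (fun k => r * (n_missed k)%:R / n%:R) = r * a / b.
  rewrite /Eiid -mulr_suml -mulr_sumr -natr_sum sum_n_missed natrM -/a -/b.
  by field; rewrite n0 gt_eqF.
by rewrite ler_pdivlMr //; nra.
Qed.

End Sampling.

Theorem mainTheorem10 (R : realType) (H : completeNormedModType R)
    (inner : H -> H -> R) (n : nat) (y : 'I_n -> H) :
  is_inner_product inner ->
  (2 <= n)%N ->
  (forall i, `|y i| <= 1) ->
  (forall i j, i != j -> 3^-1 < `|y i - y j|) ->
  [/\ Eiid (fun k => W1 (unif_meas y) (emp_meas y k))
        <= Eiid (fun k => W2 (unif_meas y) (emp_meas y k)),
      (12 * Num.sqrt 2)^-1 <= Eiid (fun k => W1 (unif_meas y) (emp_meas y k))
    & forall (d : nat) (e : 'I_d -> H),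
        lin_indep e -> (forall i, in_span e (y i)) ->
        (12 * Num.sqrt (2 * d%:R))^-1
          <= Num.sqrt (Eiid (fun k => S1 inner (unif_meas y) (emp_meas y k) ^+ 2))].
Proof.
move=> ip n1 _ ysep; have n0 := ltnW n1; have mu1 := unif_mass y n0.
have cp k := sample_couplingP y k.
have EW1 : (12 * Num.sqrt 2)^-1 <= Eiid (fun k => W1 (unif_meas y) (emp_meas y k)).
  apply: le_trans (Eiid_W1_emp_ge n1 _ (fun i j ij => ltW (ysep i j ij))); last first.
    by rewrite invr_ge0 ler0n.
  have s2 : 1 <= Num.sqrt 2 :> R by rewrite -[leLHS]sqrtr1 ler_wsqrtr // ler1n.
  by rewrite -invfM lef_pV2 ?posrE ?mulr_gt0 ?sqrtr_gt0 ?ltr0n //; lra.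
split=> // [|d e _ span_y].
  by apply: ler_Eiid => k; exact: W1_le_W2 (cp k) mu1.
have [->|d0] := posnP d; first by rewrite mulr0 sqrtr0 mulr0 invr0 sqrtr_ge0.
have sd : 0 < Num.sqrt d%:R :> R by rewrite sqrtr_gt0 ltr0n.
have span_emp k a : a \in emp_meas y k -> in_span e a.2.
  by move=> /mem_unif_meas[i ->].
have span_unif a : a \in unif_meas y -> in_span e a.2.
  by move=> /mem_unif_meas[i ->].
have -> : (12 * Num.sqrt (2 * d%:R))^-1 = (12 * Num.sqrt 2)^-1 / Num.sqrt d%:R :> R.
  by rewrite sqrtrM ?ler0n // mulrA invfM.
rewrite ler_pdivrMr // [leRHS]mulrC.
apply: le_trans EW1 (Eiid_le_sqrt_Eiid_sqr n0 (ltW sd) _) => k.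
by rewrite (W1_ge0 (cp k)) (W1_le_sqrt_dim_S1 ip (cp k) mu1 span_unif (span_emp k)).
Qed.
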